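(* Let $\mathcal{C}$ be a path category and let $\mathcal{D}$ be a class of display maps with weak (respectively strong) homotopy $\Pi$-types in $\mathcal{C}$. Let $\overline{\mathcal{D}}$ be the closure of $\mathcal{D}$ under composition. Then for all composable $d: X \to I$ in $\mathcal{D}$ and $f: I \to J$ in $\overline{\mathcal{D}}$, the weak (respectively strong) homotopy $\Pi$-type $\Pi_f(d)$ exists.
   Context: A path category is a category with two classes of maps, fibrations and weak equivalences, such that: fibrations are closed under composition and contain the isomorphisms; pullbacks of fibrations along arbitrary maps exist and are fibrations; there is a terminal object and every map to it is a fibration; isomorphisms are weak equivalences; weak equivalences satisfy 2-out-of-6; every object $X$ has a path object, a factorisation of the diagonal as a weak equivalence $X \to PX$ followed by a fibration $(s,t): PX \to X\times X$; pullbacks of trivial fibrations are trivial fibrations; every trivial fibration has a section. For a fibration $p: Y \to A$ one similarly factors $Y \to Y\times_A Y$ to get a fibrewise path object $P_A Y$, and two maps $m, m': D \to Y$ over $A$ are fibrewise homotopic ($m \simeq_A m'$) if there is $H: D \to P_A Y$ with $(s,t)H = (m,m')$. Homotopy $\Pi$-types: given fibrations $g: C \to B$ and $f: B \to A$, a weak homotopy $\Pi$-type $\Pi_f(g)$ is a fibration $\pi: \Pi \to A$ with a map $\varepsilon: \Pi\times_A B \to C$ satisfying $g\varepsilon = $ the projection to $B$, such that for every map $h: D \to A$ and every $m: D\times_A B \to C$ with $gm$ equal to the projection to $B$, there is $k: D \to \Pi$ with $\pi k = h$ and $\varepsilon\circ(k\times_A B) \simeq_B m$; it is strong if moreover for any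 $k, k': D \to \Pi$ over $A$ with $\varepsilon(k\times_A B) \simeq_B \varepsilon(k'\times_A B)$ we have $k \simeq_A k'$. A class $\mathcal{D}$ of fibrations is a class of display maps with weak (strong) homotopy $\Pi$-types if: every identity map lies in $\mathcal{D}$; the pullback of a map in $\mathcal{D}$ along any map can be found in $\mathcal{D}$; and for all composable $d: X \to I$, $e: I \to J$ in $\mathcal{D}$ a weak (strong) homotopy $\Pi$-type $\Pi_e(d)$ exists and can be found in $\mathcal{D}$. *)

Unset Implicit Arguments.


Record Category := {
  Ob :> Type;
  Hom : Ob -> Ob -> Type;
  idm : forall X : Ob, Hom X X;
  comp : forall {X Y Z : Ob}, Hom Y Z -> Hom X Y -> Hom X Z;
  comp_assoc : forall (X Y Z W : Ob) (f : Hom X Y) (g : Hom Y Z) (h : Hom Z W),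
      comp h (comp g f) = comp (comp h g) f;
  comp_idl : forall (X Y : Ob) (f : Hom X Y), comp (idm Y) f = f;
  comp_idr : forall (X Y : Ob) (f : Hom X Y), comp f (idm X) = f
}.

Arguments Hom {c} _ _.
Arguments idm {c} _.
Arguments comp {c} {X Y Z} _ _.

Notation "g ∘ f" := (comp g f) (at level 40, left associativity).

Section Basics.
Context {C : Category}.

Definition is_iso {X Y : C} (f : Hom X Y) : Prop :=
  exists g : Hom Y X, g ∘ f = idm X /\ f ∘ g = idm Y.

Definition is_terminal (T : C) : Prop :=
  forall X : C, exists f : Hom X T, forall g : Hom X T, g = f.

Definition is_pullback {X Y A : C} (f : Hom X A) (g : Hom Y A)
    (P : C) (p1 : Hom P X) (p2 : Hom P Y) : Prop :=
  f ∘ p1 = g ∘ p2 /\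
  forall (Z : C) (u : Hom Z X) (v : Hom Z Y), f ∘ u = g ∘ v ->
    exists w : Hom Z P, p1 ∘ w = u /\ p2 ∘ w = v /\
      forall w' : Hom Z P, p1 ∘ w' = u -> p2 ∘ w' = v -> w' = w.

Definition is_product (X Y P : C) (p1 : Hom P X) (p2 : Hom P Y) : Prop :=
  forall (Z : C) (u : Hom Z X) (v : Hom Z Y),
    exists w : Hom Z P, p1 ∘ w = u /\ p2 ∘ w = v /\
      forall w' : Hom Z P, p1 ∘ w' = u -> p2 ∘ w' = v -> w' = w.
End Basics.

Record PathCategory := {
  pc_cat :> Category;
  fib : forall {X Y : pc_cat}, Hom X Y -> Prop;
  weq : forall {X Y : pc_cat}, Hom X Y -> Prop;
  fib_comp : forall (X Y Z : pc_cat) (f : Hom X Y) (g : Hom Y Z),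
      fib f -> fib g -> fib (g ∘ f);
  fib_iso : forall (X Y : pc_cat) (f : Hom X Y), is_iso f -> fib f;
  fib_pullback : forall (X Y A : pc_cat) (p : Hom Y A) (f : Hom X A),
      fib p -> exists (P : pc_cat) (p1 : Hom P X) (p2 : Hom P Y),
        is_pullback f p P p1 p2 /\ fib p1;
  terminal_fib : exists T : pc_cat, is_terminal T /\
      forall (X : pc_cat) (f : Hom X T), fib f;
  weq_iso : forall (X Y : pc_cat) (f : Hom X Y), is_iso f -> weq f;
  weq_2of6 : forall (A B C D : pc_cat) (f : Hom A B) (g : Hom B C) (h : Hom C D),
      weq (g ∘ f) -> weq (h ∘ g) ->
      weq f /\ weq g /\ weq h /\ weq (h ∘ g ∘ f);
  path_object : forall X : pc_cat,
      exists (PX : pc_cat) (r : Hom X PX) (s t : Hom PX X)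
             (XX : pc_cat) (pr1 pr2 : Hom XX X) (u : Hom PX XX),
        is_product X X XX pr1 pr2 /\ weq r /\ s ∘ r = idm X /\ t ∘ r = idm X /\
        pr1 ∘ u = s /\ pr2 ∘ u = t /\ fib u;
  trivfib_pullback : forall (X Y A P : pc_cat) (p : Hom Y A) (f : Hom X A)
      (p1 : Hom P X) (p2 : Hom P Y),
      fib p -> weq p -> is_pullback f p P p1 p2 -> fib p1 /\ weq p1;
  trivfib_section : forall (X Y : pc_cat) (p : Hom X Y),
      fib p -> weq p -> exists s : Hom Y X, p ∘ s = idm Y
}.


Arguments fib {p0} {X Y} _.
Arguments weq {p0} {X Y} _.
Section PathCat.
Context {C : PathCategory}.

(* (P, r, s, t) is a fibrewise path object for p : Y -> A: the diagonal
   Y -> Y x_A Y factors as the weak equivalence r : Y -> P followed by the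
   fibration (s,t) : P -> Y x_A Y. *)
Definition is_fib_path_obj {Y A : C} (p : Hom Y A)
    (P : C) (r : Hom Y P) (s t : Hom P Y) : Prop :=
  exists (Q : C) (q1 q2 : Hom Q Y) (u : Hom P Q),
    is_pullback p p Q q1 q2 /\ weq r /\ s ∘ r = idm Y /\ t ∘ r = idm Y /\
    q1 ∘ u = s /\ q2 ∘ u = t /\ fib u.

Definition fhtpy {Y A D : C} (p : Hom Y A) (m m' : Hom D Y) : Prop :=
  exists (P : C) (r : Hom Y P) (s t : Hom P Y),
    is_fib_path_obj p P r s t /\
    exists H : Hom D P, s ∘ H = m /\ t ∘ H = m'.

Definition is_hPi (strong : bool) {Cc B A : C} (g : Hom Cc B) (f : Hom B A)
    (Pi : C) (pi : Hom Pi A) : Prop :=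
  fib pi /\
  exists (Q : C) (q1 : Hom Q Pi) (q2 : Hom Q B) (eps : Hom Q Cc),
    is_pullback pi f Q q1 q2 /\ g ∘ eps = q2 /\
    (forall (D : C) (h : Hom D A) (E : C) (e1 : Hom E D) (e2 : Hom E B),
       is_pullback h f E e1 e2 ->
       forall m : Hom E Cc, g ∘ m = e2 ->
       exists k : Hom D Pi, pi ∘ k = h /\
         forall w : Hom E Q, q1 ∘ w = k ∘ e1 -> q2 ∘ w = e2 ->
           fhtpy g (eps ∘ w) m) /\
    (strong = true ->
     forall (D : C) (k k' : Hom D Pi), pi ∘ k = pi ∘ k' ->
     forall (E : C) (e1 : Hom E D) (e2 : Hom E B),
       is_pullback (pi ∘ k) f E e1 e2 ->
       forall w w' : Hom E Q,
         q1 ∘ w = k ∘ e1 -> q2 ∘ w = e2 ->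
         q1 ∘ w' = k' ∘ e1 -> q2 ∘ w' = e2 ->
         fhtpy g (eps ∘ w) (eps ∘ w') -> fhtpy pi k k').

Definition MapClass := forall X Y : C, Hom X Y -> Prop.

Definition is_display_class (strong : bool) (Dc : MapClass) : Prop :=
  (forall (X Y : C) (f : Hom X Y), Dc X Y f -> fib f) /\
  (forall X : C, Dc X X (idm X)) /\
  (forall (X I J : C) (d : Hom X I) (f : Hom J I), Dc X I d ->
     exists (P : C) (p1 : Hom P J) (p2 : Hom P X),
       is_pullback f d P p1 p2 /\ Dc P J p1) /\
  (forall (X I J : C) (d : Hom X I) (e : Hom I J), Dc X I d -> Dc I J e ->
     exists (Pi : C) (pi : Hom Pi J), is_hPi strong d e Pi pi /\ Dc Pi J pi).

Inductive comp_closure (Dc : MapClass) : MapClass :=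
| cc_base : forall (X Y : C) (f : Hom X Y), Dc X Y f -> comp_closure Dc X Y f
| cc_comp : forall (X Y Z : C) (f : Hom X Y) (g : Hom Y Z),
    comp_closure Dc X Y f -> comp_closure Dc Y Z g -> comp_closure Dc X Z (g ∘ f).
End PathCat.


(* The Π-type along a composite [g ∘ f] is the iterated one, [Π_g(Π_f(d))],
   whose evaluation map is [Π_2 ×_J I -> Π_1 ×_K I -> X]; as the display maps
   are closed under Π-types, induction over the composition closure produces
   [Π_f(d)] for every [f] in it.  Checking the universal property of the
   iterated Π-type needs three facts about fibrewise homotopies: they are
   transitive, stable under postcomposition, and a homotopy over [K] between
   maps into [Π_1] lifts to one over [I] between maps into [Π_1 ×_K I].  All
   three come from moving homotopies between path objects, which rests on the
   factorisation of every map as a weak equivalence followed by a fibration. *)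

Section PathCategoryTheory.
Context {C : PathCategory}.

Lemma comp_eq_precomp {X Y Z W : C} (p : Hom Y Z) (q : Hom X Y) (r : Hom X Z) (y : Hom W X) :
  p ∘ q = r -> p ∘ (q ∘ y) = r ∘ y.
Proof. intros H. rewrite comp_assoc, H. reflexivity. Qed.

Ltac assoc_r := repeat rewrite <- comp_assoc; rewrite ?comp_idl, ?comp_idr.

(* [rewrite_assoc H] with [H : p ∘ q = r] also rewrites [p ∘ (q ∘ y)] into
   [r ∘ y], so that equations apply inside right-nested composites. *)
Ltac rewrite_assoc H :=
  let H' := fresh in
  pose proof (fun W (y : Hom W _) => comp_eq_precomp _ _ _ y H) as H';
  assoc_r; rewrite ?H', ?H; clear H'; assoc_r.

Lemma weq_id (X : C) : weq (idm X).
Proof. apply weq_iso. exists (idm X). rewrite comp_idl. auto. Qed.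

Lemma weq_comp {X Y Z : C} (f : Hom X Y) (g : Hom Y Z) :
  weq f -> weq g -> weq (g ∘ f).
Proof.
  intros Hf Hg. destruct (weq_2of6 C X Y Y Z f (idm Y) g) as (_ & _ & _ & H);
  rewrite ?comp_idl, ?comp_idr in *; auto.
Qed.

Lemma weq_cancel_l {X Y Z : C} (f : Hom X Y) (g : Hom Y Z) :
  weq g -> weq (g ∘ f) -> weq f.
Proof.
  intros Hg Hgf. destruct (weq_2of6 C X Y Z Z f g (idm Z)) as (H & _);
  rewrite ?comp_idl; auto.
Qed.

Lemma weq_cancel_r {X Y Z : C} (f : Hom X Y) (g : Hom Y Z) :
  weq f -> weq (g ∘ f) -> weq g.
Proof.
  intros Hf Hgf. destruct (weq_2of6 C X X Y Z (idm X) f g) as (_ & _ & H & _);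
  rewrite ?comp_idr; auto.
Qed.

Lemma weq_section {X Y : C} (p : Hom X Y) (s : Hom Y X) :
  p ∘ s = idm Y -> weq p -> weq s.
Proof. intros H Hp. apply (weq_cancel_l s p Hp). rewrite H. apply weq_id. Qed.

Lemma weq_retraction {X Y : C} (s : Hom X Y) (r : Hom Y X) :
  s ∘ r = idm Y -> weq r -> weq s.
Proof. intros H Hr. apply (weq_cancel_r r s Hr). rewrite H. apply weq_id. Qed.

Lemma pullback_sym {X Y A P : C} (f : Hom X A) (g : Hom Y A) (p1 : Hom P X) (p2 : Hom P Y) :
  is_pullback f g P p1 p2 -> is_pullback g f P p2 p1.
Proof.
  intros [E U]. split; [auto |].
  intros Z u v Huv. destruct (U Z v u (eq_sym Huv)) as (w & H1 & H2 & H3).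
  exists w. auto.
Qed.

Lemma pullback_lift {X Y A P : C} {f : Hom X A} {g : Hom Y A} {p1 : Hom P X} {p2 : Hom P Y} :
  is_pullback f g P p1 p2 -> forall {Z} (u : Hom Z X) (v : Hom Z Y), f ∘ u = g ∘ v ->
  exists w, p1 ∘ w = u /\ p2 ∘ w = v.
Proof. intros [_ U] Z u v H. destruct (U Z u v H) as (w & H1 & H2 & _). eauto. Qed.

Lemma pullback_ext {X Y A P : C} {f : Hom X A} {g : Hom Y A} {p1 : Hom P X} {p2 : Hom P Y} :
  is_pullback f g P p1 p2 -> forall {Z} (w w' : Hom Z P),
  p1 ∘ w = p1 ∘ w' -> p2 ∘ w = p2 ∘ w' -> w = w'.
Proof.
  intros [E U] Z w w' H1 H2.
  destruct (U Z (p1 ∘ w) (p2 ∘ w)) as (v & _ & _ & Hv).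
  { rewrite !comp_assoc, E. reflexivity. }
  rewrite (Hv w), (Hv w'); auto.
Qed.

Lemma pullback_intro {X Y A P : C} (f : Hom X A) (g : Hom Y A) (p1 : Hom P X) (p2 : Hom P Y) :
  f ∘ p1 = g ∘ p2 ->
  (forall Z (u : Hom Z X) (v : Hom Z Y), f ∘ u = g ∘ v ->
     exists w, p1 ∘ w = u /\ p2 ∘ w = v) ->
  (forall Z (w w' : Hom Z P), p1 ∘ w = p1 ∘ w' -> p2 ∘ w = p2 ∘ w' -> w = w') ->
  is_pullback f g P p1 p2.
Proof.
  intros E Lift Ext. split; [exact E |].
  intros Z u v Huv. destruct (Lift Z u v Huv) as (w & H1 & H2).
  exists w. split; [exact H1 |]. split; [exact H2 |].
  intros w' H1' H2'. apply Ext; congruence.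
Qed.

Lemma pullback_fib {X Y A P : C} (f : Hom X A) (g : Hom Y A) (p1 : Hom P X) (p2 : Hom P Y) :
  is_pullback f g P p1 p2 -> fib g -> fib p1.
Proof.
  intros HP Hg.
  destruct (fib_pullback C X Y A g f Hg) as (P' & q1 & q2 & HP' & Fq1).
  destruct (pullback_lift HP' p1 p2 (proj1 HP)) as (w & Hw1 & Hw2).
  destruct (pullback_lift HP q1 q2 (proj1 HP')) as (v & Hv1 & Hv2).
  assert (Hiso : is_iso w).
  { exists v. split.
    - apply (pullback_ext HP); assoc_r; rewrite_assoc Hv1; rewrite_assoc Hv2; auto.
    - apply (pullback_ext HP'); assoc_r; rewrite_assoc Hw1; rewrite_assoc Hw2; auto. }
  rewrite <- Hw1. apply fib_comp; [apply fib_iso; exact Hiso | exact Fq1].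
Qed.

Lemma pullback_pasting {D J K I E E' : C} (h : Hom D J) (g : Hom K J) (f : Hom I K)
  (k : Hom I J) (e1' : Hom E' D) (e2' : Hom E' K) (e1 : Hom E D) (e2 : Hom E I)
  (y : Hom E E') :
  g ∘ f = k -> is_pullback h g E' e1' e2' -> is_pullback h k E e1 e2 ->
  e1' ∘ y = e1 -> e2' ∘ y = f ∘ e2 -> is_pullback e2' f E y e2.
Proof.
  intros <- HE' HE Hy1 Hy2. apply pullback_intro; [exact Hy2 | |].
  - intros Z u v Huv.
    destruct (pullback_lift HE (e1' ∘ u) v) as (w & Hw1 & Hw2).
    { assoc_r. rewrite_assoc (proj1 HE'). rewrite Huv. reflexivity. }
    exists w. split; [| exact Hw2].
    apply (pullback_ext HE'); assoc_r.
    + rewrite_assoc Hy1. exact Hw1.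
    + rewrite_assoc Hy2. rewrite_assoc Hw2. symmetry. exact Huv.
  - intros Z w w' H1 H2. apply (pullback_ext HE); [| exact H2].
    rewrite <- Hy1, <- !comp_assoc, H1. reflexivity.
Qed.

Lemma pullback_comp_split {D I K J E : C} (h : Hom D J) (g : Hom K J) (f : Hom I K)
  (e1 : Hom E D) (e2 : Hom E I) :
  fib g -> is_pullback h (g ∘ f) E e1 e2 ->
  exists E' (e1' : Hom E' D) (e2' : Hom E' K) (y : Hom E E'),
    is_pullback h g E' e1' e2' /\ e1' ∘ y = e1 /\ e2' ∘ y = f ∘ e2 /\
    is_pullback e2' f E y e2.
Proof.
  intros Fg HE.
  destruct (fib_pullback C D K J g h Fg) as (E' & e1' & e2' & HE' & _).
  destruct (pullback_lift HE' e1 (f ∘ e2)) as (y & Hy1 & Hy2).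
  { rewrite comp_assoc. exact (proj1 HE). }
  exists E', e1', e2', y.
  split; [exact HE' |]. split; [exact Hy1 |]. split; [exact Hy2 |].
  exact (pullback_pasting h g f (g ∘ f) e1' e2' e1 e2 y eq_refl HE' HE Hy1 Hy2).
Qed.

Lemma terminal_maps_eq {T : C} :
  is_terminal T -> forall (X : C) (g g' : Hom X T), g = g'.
Proof. intros HT X g g'. destruct (HT X) as (h & Hh). rewrite (Hh g), (Hh g'). reflexivity. Qed.

Lemma product_pullback_terminal {T X Y P : C} (p1 : Hom P X) (p2 : Hom P Y) :
  is_terminal T -> is_product X Y P p1 p2 ->
  forall (tX : Hom X T) (tY : Hom Y T), is_pullback tX tY P p1 p2.
Proof.
  intros HT Hprod tX tY. split; [apply (terminal_maps_eq HT) |].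
  intros Z u v _. apply Hprod.
Qed.

Lemma weq_fib_factorisation {X Y : C} (f : Hom X Y) :
  exists Z (i : Hom X Z) (p : Hom Z Y), weq i /\ fib p /\ p ∘ i = f.
Proof.
  destruct (terminal_fib C) as (T & HT & FT).
  pose proof (terminal_maps_eq HT) as Teq.
  destruct (HT Y) as (tY & _).
  destruct (path_object C Y)
    as (PY & r & s & t & YY & pr1 & pr2 & u & Hprod & Wr & Hsr & Htr & Hs & Ht & Fu).
  pose proof (product_pullback_terminal pr1 pr2 HT Hprod tY tY) as HYY.
  assert (Fs : fib s).
  { rewrite <- Hs. apply fib_comp; [exact Fu | exact (pullback_fib _ _ _ _ HYY (FT _ tY))]. }
  assert (Ws : weq s) by exact (weq_retraction s r Hsr Wr).
  destruct (fib_pullback C X PY Y s f Fs) as (Z & z1 & z2 & HZ & _).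
  destruct (trivfib_pullback C X PY Y Z s f z1 z2 Fs Ws HZ) as [_ Wz1].
  destruct (pullback_lift HZ (idm X) (r ∘ f)) as (i & Hi1 & Hi2).
  { assoc_r. rewrite_assoc Hsr. reflexivity. }
  exists Z, i, (t ∘ z2). split; [| split].
  - apply (weq_cancel_l i z1 Wz1). rewrite Hi1. apply weq_id.
  - (* [t ∘ z2] factors through [X × Y] as a pullback of [u] followed by a projection. *)
    destruct (fib_pullback C X Y T tY (tY ∘ f) (FT _ tY)) as (XY & q1 & q2 & HXY & _).
    assert (Fq2 : fib q2) by exact (pullback_fib _ _ _ _ (pullback_sym _ _ _ _ HXY) (FT _ _)).
    destruct (pullback_lift HYY (f ∘ q1) q2 (Teq _ _ _)) as (fx & Hfx1 & Hfx2).
    pose proof (pullback_pasting tY tY f (tY ∘ f) pr2 pr1 q2 q1 fx eq_refl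
      (pullback_sym _ _ _ _ HYY) (pullback_sym _ _ _ _ HXY) Hfx2 Hfx1) as Hfx.
    destruct (pullback_lift HXY z1 (t ∘ z2) (Teq _ _ _)) as (ze & Hze1 & Hze2).
    assert (Hze : is_pullback fx u Z ze z2).
    { apply (pullback_pasting f pr1 u s q1 fx z1 z2 ze Hs (pullback_sym _ _ _ _ Hfx) HZ Hze1).
      apply (pullback_ext HYY); assoc_r.
      - rewrite_assoc Hfx1. rewrite_assoc Hze1. rewrite_assoc Hs. exact (proj1 HZ).
      - rewrite_assoc Hfx2. rewrite_assoc Hze2. rewrite_assoc Ht. reflexivity. }
    rewrite <- Hze2. apply fib_comp; [exact (pullback_fib _ _ _ _ Hze Fu) | exact Fq2].
  - assoc_r. rewrite_assoc Hi2. rewrite_assoc Htr. reflexivity.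
Qed.

Lemma weq_fib_lift {A B E Y : C} (w : Hom A B) (u : Hom E Y) (x : Hom A E) (y : Hom B Y) :
  weq w -> fib u -> u ∘ x = y ∘ w -> exists l : Hom B E, u ∘ l = y.
Proof.
  intros Ww Fu Hsq.
  destruct (fib_pullback C B E Y u y Fu) as (Z & z1 & z2 & HZ & Fz1).
  destruct (pullback_lift HZ w x (eq_sym Hsq)) as (j & Hj1 & _).
  destruct (weq_fib_factorisation j) as (W & i & p & Wi & Fp & Hpi).
  assert (Wz1p : weq (z1 ∘ p)).
  { apply (weq_cancel_r i _ Wi). assoc_r. rewrite_assoc Hpi. rewrite Hj1. exact Ww. }
  destruct (trivfib_section C W B (z1 ∘ p) (fib_comp _ _ _ _ _ _ Fp Fz1) Wz1p) as (sg & Hsg).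
  exists (z2 ∘ (p ∘ sg)).
  rewrite comp_assoc, <- (proj1 HZ), <- comp_assoc, (comp_assoc _ _ _ _ _ sg p z1), Hsg.
  apply comp_idr.
Qed.

Lemma fib_path_obj_ends {Y A P : C} (p : Hom Y A) (r : Hom Y P) (s t : Hom P Y) :
  is_fib_path_obj p P r s t -> p ∘ s = p ∘ t.
Proof.
  intros (Q & q1 & q2 & u & HQ & _ & _ & _ & Hs & Ht & _).
  rewrite <- Hs, <- Ht, !comp_assoc, (proj1 HQ). reflexivity.
Qed.

Lemma fib_path_obj_src_fib {Y A P : C} (p : Hom Y A) (r : Hom Y P) (s t : Hom P Y) :
  fib p -> is_fib_path_obj p P r s t -> fib s.
Proof.
  intros Fp (Q & q1 & q2 & u & HQ & _ & _ & _ & Hs & _ & Fu).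
  rewrite <- Hs. apply fib_comp; [exact Fu | exact (pullback_fib _ _ _ _ HQ Fp)].
Qed.

Lemma fib_path_obj_src_weq {Y A P : C} (p : Hom Y A) (r : Hom Y P) (s t : Hom P Y) :
  is_fib_path_obj p P r s t -> weq s.
Proof. intros (_ & _ & _ & _ & _ & Wr & Hsr & _). exact (weq_retraction s r Hsr Wr). Qed.

Lemma fib_path_obj_through {Y A XX V : C} (p : Hom Y A) (x1 x2 : Hom XX Y)
  (v : Hom V XX) (rho : Hom Y V) :
  is_pullback p p XX x1 x2 -> weq rho ->
  x1 ∘ (v ∘ rho) = idm Y -> x2 ∘ (v ∘ rho) = idm Y ->
  exists W (r : Hom Y W) (s t : Hom W Y) (i : Hom V W),
    is_fib_path_obj p W r s t /\ s ∘ i = x1 ∘ v /\ t ∘ i = x2 ∘ v.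
Proof.
  intros HXX Wrho H1 H2.
  destruct (weq_fib_factorisation v) as (W & i & q & Wi & Fq & Hqi).
  exists W, (i ∘ rho), (x1 ∘ q), (x2 ∘ q), i.
  split; [| split; assoc_r; rewrite_assoc Hqi; reflexivity].
  exists XX, x1, x2, q. split; [exact HXX |]. split; [exact (weq_comp _ _ Wrho Wi) |].
  split; [assoc_r; rewrite_assoc Hqi; exact H1 |].
  split; [assoc_r; rewrite_assoc Hqi; exact H2 |].
  auto.
Qed.

Lemma fib_path_obj_exists {Y A : C} (p : Hom Y A) :
  fib p -> exists P (r : Hom Y P) (s t : Hom P Y), is_fib_path_obj p P r s t.
Proof.
  intros Fp. destruct (fib_pullback C Y Y A p p Fp) as (XX & x1 & x2 & HXX & _).
  destruct (pullback_lift HXX (idm Y) (idm Y) eq_refl) as (δ & H1 & H2).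
  destruct (fib_path_obj_through p x1 x2 δ (idm Y) HXX (weq_id Y))
    as (P & r & s & t & _ & HP & _); rewrite ?comp_idr; eauto.
Qed.

Lemma fhtpy_precomp {Y A D D' : C} (p : Hom Y A) (m m' : Hom D Y) (y : Hom D' D) :
  fhtpy p m m' -> fhtpy p (m ∘ y) (m' ∘ y).
Proof.
  intros (P & r & s & t & HP & H & H1 & H2).
  exists P, r, s, t. split; [exact HP |].
  exists (H ∘ y). rewrite !comp_assoc, H1, H2. auto.
Qed.

(* The homotopy, a map into the path object [P'] of [q], is moved into [P] by
   lifting [P' -> X ×_I X] against the fibration [P -> X ×_I X]. *)
Lemma fhtpy_in_fib_path_obj {Q X I D P : C} (q : Hom Q I) (d : Hom X I) (eps : Hom Q X)
  (al be : Hom D Q) (r : Hom X P) (s t : Hom P X) :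
  d ∘ eps = q -> fhtpy q al be -> is_fib_path_obj d P r s t ->
  exists G : Hom D P, s ∘ G = eps ∘ al /\ t ∘ G = eps ∘ be.
Proof.
  intros Heps (P' & r' & s' & t' & HP' & H & HH1 & HH2) HP.
  pose proof (fib_path_obj_ends q r' s' t' HP') as Hq'.
  destruct HP' as (_ & _ & _ & _ & _ & Wr' & Hs'r' & Ht'r' & _).
  destruct HP as (XX & x1 & x2 & u & HXX & _ & Hsr & Htr & Hs & Ht & Fu).
  destruct (pullback_lift HXX (eps ∘ s') (eps ∘ t')) as (al' & Ha1 & Ha2).
  { assoc_r. rewrite_assoc Heps. exact Hq'. }
  destruct (weq_fib_lift r' u (r ∘ eps) al' Wr' Fu) as (l & Hl).
  { apply (pullback_ext HXX); assoc_r.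
    - rewrite_assoc Hs. rewrite_assoc Hsr. rewrite_assoc Ha1. rewrite_assoc Hs'r'. reflexivity.
    - rewrite_assoc Ht. rewrite_assoc Htr. rewrite_assoc Ha2. rewrite_assoc Ht'r'. reflexivity. }
  exists (l ∘ H). split.
  - rewrite <- Hs. assoc_r. rewrite_assoc Hl. rewrite_assoc Ha1. rewrite HH1. reflexivity.
  - rewrite <- Ht. assoc_r. rewrite_assoc Hl. rewrite_assoc Ha2. rewrite HH2. reflexivity.
Qed.

Lemma fhtpy_postcomp {Q X I D : C} (q : Hom Q I) (d : Hom X I) (eps : Hom Q X)
  (al be : Hom D Q) :
  fib d -> d ∘ eps = q -> fhtpy q al be -> fhtpy d (eps ∘ al) (eps ∘ be).
Proof.
  intros Fd Heps H. destruct (fib_path_obj_exists d Fd) as (P & r & s & t & HP).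
  destruct (fhtpy_in_fib_path_obj q d eps al be r s t Heps H HP) as (G & HG1 & HG2).
  exists P, r, s, t. split; [exact HP |]. exists G. auto.
Qed.

(* Concatenation: the pullback [P ×_X P] of [t] and [s] maps to [X ×_I X] by
   the outer endpoints, and the diagonal factors through it via the weak
   equivalence [(r, r)]. *)
Lemma fhtpy_concat {X I D P : C} (d : Hom X I) (r : Hom X P) (s t : Hom P X)
  (G1 G2 : Hom D P) :
  fib d -> is_fib_path_obj d P r s t -> t ∘ G1 = s ∘ G2 -> fhtpy d (s ∘ G1) (t ∘ G2).
Proof.
  intros Fd HP HG.
  pose proof (fib_path_obj_src_fib d r s t Fd HP) as Fs.
  pose proof (fib_path_obj_src_weq d r s t HP) as Ws.
  pose proof (fib_path_obj_ends d r s t HP) as Hds.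
  destruct HP as (XX & x1 & x2 & u & HXX & Wr & Hsr & Htr & _).
  destruct (fib_pullback C P P X s t Fs) as (PP & a & b & HPP & _).
  destruct (trivfib_pullback C P P X PP s t a b Fs Ws HPP) as [_ Wa].
  destruct (pullback_lift HPP r r) as (rr & Hrr1 & Hrr2).
  { rewrite Hsr, Htr. reflexivity. }
  destruct (pullback_lift HXX (s ∘ a) (t ∘ b)) as (v & Hv1 & Hv2).
  { assoc_r. rewrite_assoc Hds. rewrite (proj1 HPP). rewrite_assoc Hds. reflexivity. }
  assert (Wrr : weq rr) by (apply (weq_cancel_l rr a Wa); rewrite Hrr1; exact Wr).
  destruct (fib_path_obj_through d x1 x2 v rr HXX Wrr)
    as (W & r' & s' & t' & i & HW & Hi1 & Hi2).
  { assoc_r. rewrite_assoc Hv1. rewrite_assoc Hrr1. exact Hsr. }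
  { assoc_r. rewrite_assoc Hv2. rewrite_assoc Hrr2. exact Htr. }
  destruct (pullback_lift HPP G1 G2 HG) as (GG & HGG1 & HGG2).
  exists W, r', s', t'. split; [exact HW |].
  exists (i ∘ GG). split; assoc_r.
  - rewrite_assoc Hi1. rewrite_assoc Hv1. rewrite_assoc HGG1. reflexivity.
  - rewrite_assoc Hi2. rewrite_assoc Hv2. rewrite_assoc HGG2. reflexivity.
Qed.

Lemma fhtpy_trans {X I D : C} (d : Hom X I) (m1 m2 m3 : Hom D X) :
  fib d -> fhtpy d m1 m2 -> fhtpy d m2 m3 -> fhtpy d m1 m3.
Proof.
  intros Fd (P & r & s & t & HP & G1 & HG1 & HG2) H23.
  destruct (fhtpy_in_fib_path_obj d d (idm X) m2 m3 r s t (comp_idr _ _ _ d) H23 HP)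
    as (G2 & HG3 & HG4).
  rewrite comp_idl in HG3, HG4. rewrite <- HG1, <- HG4.
  apply (fhtpy_concat d r s t); [exact Fd | exact HP | congruence].
Qed.


Lemma pullback_fibre_square {Pi K I Q1 QQ PP : C} (pi : Hom Pi K) (f : Hom I K)
  (q1 : Hom Q1 Pi) (q2 : Hom Q1 I) (y1 y2 : Hom QQ Q1) (c1 c2 : Hom PP Pi)
  (g : Hom QQ PP) :
  is_pullback pi f Q1 q1 q2 -> is_pullback q2 q2 QQ y1 y2 -> is_pullback pi pi PP c1 c2 ->
  c1 ∘ g = q1 ∘ y1 -> c2 ∘ g = q1 ∘ y2 -> is_pullback f (pi ∘ c1) QQ (q2 ∘ y1) g.
Proof.
  intros HQ1 HQQ HPP Hg1 Hg2.
  pose proof (proj1 HQ1) as E1.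
  apply pullback_intro.
  - assoc_r. rewrite_assoc Hg1. rewrite_assoc E1. reflexivity.
  - intros Z x z Hxz.
    destruct (pullback_lift HQ1 (c1 ∘ z) x) as (w1 & Hw11 & Hw12).
    { rewrite Hxz, comp_assoc. reflexivity. }
    destruct (pullback_lift HQ1 (c2 ∘ z) x) as (w2 & Hw21 & Hw22).
    { rewrite Hxz, !comp_assoc, (proj1 HPP). reflexivity. }
    destruct (pullback_lift HQQ w1 w2) as (w & Hw1 & Hw2).
    { rewrite Hw12, Hw22. reflexivity. }
    exists w. split.
    + assoc_r. rewrite_assoc Hw1. exact Hw12.
    + apply (pullback_ext HPP); assoc_r.
      * rewrite_assoc Hg1. rewrite_assoc Hw1. exact Hw11.
      * rewrite_assoc Hg2. rewrite_assoc Hw2. exact Hw21.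
  - intros Z w w' H1 H2.
    assert (Hy1 : y1 ∘ w = y1 ∘ w').
    { apply (pullback_ext HQ1).
      - rewrite !comp_assoc, <- (comp_eq_precomp _ _ _ w Hg1),
          <- (comp_eq_precomp _ _ _ w' Hg1), H2. reflexivity.
      - rewrite !comp_assoc. exact H1. }
    assert (Hy2 : y2 ∘ w = y2 ∘ w').
    { apply (pullback_ext HQ1).
      - rewrite !comp_assoc, <- (comp_eq_precomp _ _ _ w Hg2),
          <- (comp_eq_precomp _ _ _ w' Hg2), H2. reflexivity.
      - rewrite !comp_assoc, <- (proj1 HQQ). exact H1. }
    exact (pullback_ext HQQ _ _ Hy1 Hy2).
Qed.

Lemma pullback_endpoints_fib {Pi K I Q1 P P' QQ : C} (pi : Hom Pi K) (f : Hom I K)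
  (q1 : Hom Q1 Pi) (q2 : Hom Q1 I) (r : Hom Pi P) (s t : Hom P Pi)
  (p1 : Hom P' P) (p2 : Hom P' I) (s' t' : Hom P' Q1) (y1 y2 : Hom QQ Q1) (u' : Hom P' QQ) :
  is_pullback pi f Q1 q1 q2 -> is_fib_path_obj pi P r s t ->
  is_pullback f (pi ∘ s) P' p2 p1 -> is_pullback q2 q2 QQ y1 y2 ->
  q1 ∘ s' = s ∘ p1 -> q2 ∘ s' = p2 -> q1 ∘ t' = t ∘ p1 ->
  y1 ∘ u' = s' -> y2 ∘ u' = t' -> fib u'.
Proof.
  intros HQ1 HP HP' HQQ Hs'1 Hs'2 Ht'1 Hu'1 Hu'2.
  destruct HP as (PP & c1 & c2 & u & HPP & _ & _ & _ & Hs & Ht & Fu).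
  destruct (pullback_lift HPP (q1 ∘ y1) (q1 ∘ y2)) as (g & Hg1 & Hg2).
  { assoc_r. rewrite_assoc (proj1 HQ1). rewrite_assoc (proj1 HQQ). reflexivity. }
  apply (pullback_fib g u u' p1); [| exact Fu].
  apply (pullback_pasting f (pi ∘ c1) u (pi ∘ s) (q2 ∘ y1) g p2 p1 u').
  - rewrite <- Hs, comp_assoc. reflexivity.
  - exact (pullback_fibre_square pi f q1 q2 y1 y2 c1 c2 g HQ1 HQQ HPP Hg1 Hg2).
  - exact HP'.
  - assoc_r. rewrite_assoc Hu'1. exact Hs'2.
  - apply (pullback_ext HPP); assoc_r.
    + rewrite_assoc Hg1. rewrite_assoc Hu'1. rewrite_assoc Hs. exact Hs'1.
    + rewrite_assoc Hg2. rewrite_assoc Hu'2. rewrite_assoc Ht. exact Ht'1.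
Qed.

Lemma fib_path_obj_pullback {Pi K I Q1 P : C} (pi : Hom Pi K) (f : Hom I K)
  (q1 : Hom Q1 Pi) (q2 : Hom Q1 I) (r : Hom Pi P) (s t : Hom P Pi) :
  fib pi -> is_pullback pi f Q1 q1 q2 -> is_fib_path_obj pi P r s t ->
  exists P' (r' : Hom Q1 P') (s' t' : Hom P' Q1) (p1 : Hom P' P),
    is_fib_path_obj q2 P' r' s' t' /\ s ∘ p1 = q1 ∘ s' /\ t ∘ p1 = q1 ∘ t' /\
    is_pullback (pi ∘ s) f P' p1 (q2 ∘ s').
Proof.
  intros Fpi HQ1 HP.
  pose proof (proj1 HQ1) as E1.
  pose proof (fib_path_obj_ends pi r s t HP) as Hps.
  pose proof (fib_path_obj_src_fib pi r s t Fpi HP) as Fs.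
  pose proof (fib_path_obj_src_weq pi r s t HP) as Ws.
  assert (Fq2 : fib q2) by exact (pullback_fib _ _ _ _ (pullback_sym _ _ _ _ HQ1) Fpi).
  destruct (fib_pullback C I P K (pi ∘ s) f (fib_comp _ _ _ _ _ _ Fs Fpi))
    as (P' & p2 & p1 & HP' & _).
  pose proof (proj1 HP') as E'.
  destruct (pullback_lift HQ1 (s ∘ p1) p2) as (s' & Hs'1 & Hs'2).
  { rewrite E', comp_assoc. reflexivity. }
  destruct (pullback_lift HQ1 (t ∘ p1) p2) as (t' & Ht'1 & Ht'2).
  { rewrite E', comp_assoc, Hps. reflexivity. }
  destruct (fib_pullback C Q1 Q1 I q2 q2 Fq2) as (QQ & y1 & y2 & HQQ & _).
  destruct (pullback_lift HQQ s' t') as (u' & Hu'1 & Hu'2).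
  { rewrite Hs'2, Ht'2. reflexivity. }
  pose proof (pullback_pasting f pi s (pi ∘ s) q2 q1 p2 p1 s' eq_refl
    (pullback_sym _ _ _ _ HQ1) HP' Hs'2 Hs'1) as Hs'.
  destruct (trivfib_pullback C Q1 P Pi P' s q1 s' p1 Fs Ws Hs') as [_ Ws'].
  pose proof HP as (_ & _ & _ & _ & _ & _ & Hsr & Htr & _).
  destruct (pullback_lift HP' q2 (r ∘ q1)) as (r' & Hr'2 & Hr'1).
  { assoc_r. rewrite_assoc Hsr. symmetry. exact E1. }
  assert (Hs'r' : s' ∘ r' = idm Q1).
  { apply (pullback_ext HQ1); assoc_r.
    - rewrite_assoc Hs'1. rewrite_assoc Hr'1. rewrite_assoc Hsr. reflexivity.
    - rewrite_assoc Hs'2. exact Hr'2. }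
  assert (Ht'r' : t' ∘ r' = idm Q1).
  { apply (pullback_ext HQ1); assoc_r.
    - rewrite_assoc Ht'1. rewrite_assoc Hr'1. rewrite_assoc Htr. reflexivity.
    - rewrite_assoc Ht'2. exact Hr'2. }
  exists P', r', s', t', p1.
  split; [| split; [auto | split; [auto | rewrite Hs'2; exact (pullback_sym _ _ _ _ HP')]]].
  exists QQ, y1, y2, u'.
  split; [exact HQQ | split; [exact (weq_section s' r' Hs'r' Ws') |]].
  split; [exact Hs'r' | split; [exact Ht'r' | split; [exact Hu'1 | split; [exact Hu'2 |]]]].
  exact (pullback_endpoints_fib pi f q1 q2 r s t p1 p2 s' t' y1 y2 u'
    HQ1 HP HP' HQQ Hs'1 Hs'2 Ht'1 Hu'1 Hu'2).
Qed.

Lemma fhtpy_pullback {Pi K I Q1 D : C} (pi : Hom Pi K) (f : Hom I K) (q1 : Hom Q1 Pi)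
  (q2 : Hom Q1 I) (al be : Hom D Q1) :
  fib pi -> is_pullback pi f Q1 q1 q2 ->
  fhtpy pi (q1 ∘ al) (q1 ∘ be) -> q2 ∘ al = q2 ∘ be -> fhtpy q2 al be.
Proof.
  intros Fpi HQ1 (P & r & s & t & HP & G & HG1 & HG2) Hab.
  destruct (fib_path_obj_pullback pi f q1 q2 r s t Fpi HQ1 HP)
    as (P' & r' & s' & t' & p1 & HP' & Hs' & Ht' & HpbP').
  pose proof (fib_path_obj_ends q2 r' s' t' HP') as Hq2.
  destruct (pullback_lift HpbP' G (q2 ∘ al)) as (G' & HG'1 & HG'2).
  { assoc_r. rewrite HG1. rewrite_assoc (proj1 HQ1). reflexivity. }
  rewrite <- comp_assoc in HG'2.
  exists P', r', s', t'. split; [exact HP' |]. exists G'. split.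
  - apply (pullback_ext HQ1); [| exact HG'2].
    rewrite <- HG1, <- HG'1, !comp_assoc, Hs'. reflexivity.
  - apply (pullback_ext HQ1).
    + rewrite <- HG2, <- HG'1, !comp_assoc, Ht'. reflexivity.
    + rewrite comp_assoc, <- Hq2, <- comp_assoc, HG'2. exact Hab.
Qed.

Definition hPi_lift {Cc B A Pi Q : C} (g : Hom Cc B) (f : Hom B A) (pi : Hom Pi A)
    (q1 : Hom Q Pi) (q2 : Hom Q B) (eps : Hom Q Cc) : Prop :=
  forall (D : C) (h : Hom D A) (E : C) (e1 : Hom E D) (e2 : Hom E B),
    is_pullback h f E e1 e2 ->
    forall m : Hom E Cc, g ∘ m = e2 ->
    exists k : Hom D Pi, pi ∘ k = h /\
      forall w : Hom E Q, q1 ∘ w = k ∘ e1 -> q2 ∘ w = e2 -> fhtpy g (eps ∘ w) m.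

Definition hPi_unique {Cc B A Pi Q : C} (g : Hom Cc B) (f : Hom B A) (pi : Hom Pi A)
    (q1 : Hom Q Pi) (q2 : Hom Q B) (eps : Hom Q Cc) : Prop :=
  forall (D : C) (k k' : Hom D Pi), pi ∘ k = pi ∘ k' ->
  forall (E : C) (e1 : Hom E D) (e2 : Hom E B),
    is_pullback (pi ∘ k) f E e1 e2 ->
    forall w w' : Hom E Q,
      q1 ∘ w = k ∘ e1 -> q2 ∘ w = e2 -> q1 ∘ w' = k' ∘ e1 -> q2 ∘ w' = e2 ->
      fhtpy g (eps ∘ w) (eps ∘ w') -> fhtpy pi k k'.

Section PiComposition.
Variables (X I K J : C) (d : Hom X I) (f : Hom I K) (g : Hom K J).
Variables (Pi1 Q1 : C) (pi1 : Hom Pi1 K) (q11 : Hom Q1 Pi1) (q12 : Hom Q1 I)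
  (eps1 : Hom Q1 X).
Variables (Pi2 Q2 : C) (pi2 : Hom Pi2 J) (q21 : Hom Q2 Pi2) (q22 : Hom Q2 K)
  (eps2 : Hom Q2 Pi1).
Variables (Q : C) (a : Hom Q Pi2) (b : Hom Q I) (c : Hom Q Q2) (e : Hom Q Q1).
Hypotheses (Fd : fib d) (Fg : fib g) (Fpi1 : fib pi1).
Hypotheses (HQ1 : is_pullback pi1 f Q1 q11 q12) (Heps1 : d ∘ eps1 = q12).
Hypotheses (HQ2 : is_pullback pi2 g Q2 q21 q22) (Heps2 : pi1 ∘ eps2 = q22).
Hypotheses (Hc1 : q21 ∘ c = a) (Hc2 : q22 ∘ c = f ∘ b).
Hypotheses (He1 : q11 ∘ e = eps2 ∘ c) (He2 : q12 ∘ e = b).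

Lemma comp_eval_fst {E E' : C} (w : Hom E Q) (w2 : Hom E' Q2) (y : Hom E E') :
  q21 ∘ (w2 ∘ y) = a ∘ w -> q22 ∘ (w2 ∘ y) = f ∘ (b ∘ w) ->
  q11 ∘ (e ∘ w) = eps2 ∘ w2 ∘ y.
Proof.
  intros H1 H2.
  assert (Hcw : c ∘ w = w2 ∘ y).
  { apply (pullback_ext HQ2); assoc_r.
    - rewrite_assoc Hc1. symmetry. exact H1.
    - rewrite_assoc Hc2. symmetry. exact H2. }
  assoc_r. rewrite_assoc He1. rewrite Hcw. reflexivity.
Qed.

Lemma hPi_lift_comp :
  hPi_lift d f pi1 q11 q12 eps1 -> hPi_lift pi1 g pi2 q21 q22 eps2 ->
  hPi_lift d (g ∘ f) pi2 a b (eps1 ∘ e).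
Proof.
  intros Lift1 Lift2 D h E e1 e2 HE m Hm.
  destruct (pullback_comp_split h g f e1 e2 Fg HE)
    as (E' & e1' & e2' & y & HE' & Hy1 & Hy2 & HEy).
  destruct (Lift1 E' e2' E y e2 HEy m Hm) as (k1 & Hk1 & Hk1w).
  destruct (Lift2 D h E' e1' e2' HE' k1 Hk1) as (k & Hk & Hkw).
  exists k. split; [exact Hk |]. intros w Hw1 Hw2.
  destruct (pullback_lift HQ2 (k ∘ e1') e2') as (w2 & Hw21 & Hw22).
  { rewrite comp_assoc, Hk. exact (proj1 HE'). }
  destruct (pullback_lift HQ1 (k1 ∘ y) e2) as (v & Hv1 & Hv2).
  { rewrite comp_assoc, Hk1. exact Hy2. }
  apply (fhtpy_trans d _ (eps1 ∘ v) _ Fd); [| apply Hk1w; assumption].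
  rewrite <- comp_assoc. apply (fhtpy_postcomp q12 d eps1 _ _ Fd Heps1).
  apply (fhtpy_pullback pi1 f q11 q12 _ _ Fpi1 HQ1).
  - rewrite (comp_eval_fst w w2 y), Hv1.
    + apply fhtpy_precomp, Hkw; assumption.
    + rewrite comp_assoc, Hw21, <- comp_assoc, Hy1. symmetry. exact Hw1.
    + rewrite comp_assoc, Hw22, Hy2, Hw2. reflexivity.
  - rewrite comp_assoc, He2, Hw2, Hv2. reflexivity.
Qed.

Lemma hPi_unique_comp :
  hPi_unique d f pi1 q11 q12 eps1 -> hPi_unique pi1 g pi2 q21 q22 eps2 ->
  hPi_unique d (g ∘ f) pi2 a b (eps1 ∘ e).
Proof.
  intros Uniq1 Uniq2 D k k' Hkk E e1 e2 HE w w' Hw1 Hw2 Hw1' Hw2' Hww'.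
  destruct (pullback_comp_split (pi2 ∘ k) g f e1 e2 Fg HE)
    as (E' & e1' & e2' & y & HE' & Hy1 & Hy2 & HEy).
  destruct (pullback_lift HQ2 (k ∘ e1') e2') as (w2 & Hw21 & Hw22).
  { rewrite comp_assoc. exact (proj1 HE'). }
  destruct (pullback_lift HQ2 (k' ∘ e1') e2') as (w2' & Hw21' & Hw22').
  { rewrite comp_assoc, <- Hkk. exact (proj1 HE'). }
  apply (Uniq2 D k k' Hkk E' e1' e2' HE' w2 w2' Hw21 Hw22 Hw21' Hw22').
  assert (P1 : pi1 ∘ (eps2 ∘ w2) = e2') by (rewrite comp_assoc, Heps2; exact Hw22).
  assert (P2 : pi1 ∘ (eps2 ∘ w2') = e2') by (rewrite comp_assoc, Heps2; exact Hw22').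
  rewrite <- P1 in HEy.
  apply (Uniq1 E' (eps2 ∘ w2) (eps2 ∘ w2') ltac:(congruence) E y e2 HEy (e ∘ w) (e ∘ w')).
  - apply (comp_eval_fst w w2 y).
    + rewrite comp_assoc, Hw21, <- comp_assoc, Hy1. symmetry. exact Hw1.
    + rewrite comp_assoc, Hw22, Hy2, Hw2. reflexivity.
  - rewrite comp_assoc, He2. exact Hw2.
  - apply (comp_eval_fst w' w2' y).
    + rewrite comp_assoc, Hw21', <- comp_assoc, Hy1. symmetry. exact Hw1'.
    + rewrite comp_assoc, Hw22', Hy2, Hw2'. reflexivity.
  - rewrite comp_assoc, He2. exact Hw2'.
  - rewrite !comp_assoc. exact Hww'.
Qed.

End PiComposition.

Lemma hPi_comp (strong : bool) {X I K J Pi1 Pi2 : C} (d : Hom X I) (f : Hom I K)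
  (g : Hom K J) (pi1 : Hom Pi1 K) (pi2 : Hom Pi2 J) :
  fib d -> fib g -> is_hPi strong d f Pi1 pi1 -> is_hPi strong pi1 g Pi2 pi2 ->
  is_hPi strong d (g ∘ f) Pi2 pi2.
Proof.
  intros Fd Fg (Fpi1 & Q1 & q11 & q12 & eps1 & HQ1 & Heps1 & Lift1 & Uniq1)
               (Fpi2 & Q2 & q21 & q22 & eps2 & HQ2 & Heps2 & Lift2 & Uniq2).
  destruct (fib_pullback C I Pi2 J pi2 (g ∘ f) Fpi2) as (Q & b & a & HQ & _).
  destruct (pullback_lift HQ2 a (f ∘ b)) as (c & Hc1 & Hc2).
  { rewrite comp_assoc. symmetry. exact (proj1 HQ). }
  destruct (pullback_lift HQ1 (eps2 ∘ c) b) as (e & He1 & He2).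
  { rewrite comp_assoc, Heps2. exact Hc2. }
  split; [exact Fpi2 |]. exists Q, a, b, (eps1 ∘ e).
  split; [exact (pullback_sym _ _ _ _ HQ) |].
  split; [rewrite comp_assoc, Heps1; exact He2 |]. split.
  - eapply hPi_lift_comp; eassumption.
  - intros Hstrong. specialize (Uniq1 Hstrong). specialize (Uniq2 Hstrong).
    eapply hPi_unique_comp; eassumption.
Qed.

Lemma comp_closure_fib (Dc : MapClass) :
  (forall (X Y : C) (f : Hom X Y), Dc X Y f -> fib f) ->
  forall (I J : C) (f : Hom I J), comp_closure Dc I J f -> fib f.
Proof.
  intros HF I J f Hf. induction Hf; [auto | apply fib_comp; assumption].
Qed.

Lemma comp_closure_hPi (strong : bool) (Dc : MapClass) :
  is_display_class strong Dc ->
  forall (I J : C) (f : Hom I J), comp_closure Dc I J f ->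
  forall (X : C) (d : Hom X I), Dc X I d ->
  exists (Pi : C) (pi : Hom Pi J), is_hPi strong d f Pi pi /\ Dc Pi J pi.
Proof.
  intros HD I J f Hf. destruct HD as (HF & _ & _ & HPi).
  induction Hf as [I J f Hf | I K J f g Hf IHf Hg IHg]; intros X d Hd.
  - exact (HPi X I J d f Hd Hf).
  - destruct (IHf X d Hd) as (Pi1 & pi1 & H1 & D1).
    destruct (IHg Pi1 pi1 D1) as (Pi2 & pi2 & H2 & D2).
    exists Pi2, pi2. split; [| exact D2].
    exact (hPi_comp strong d f g pi1 pi2 (HF _ _ d Hd) (comp_closure_fib Dc HF _ _ g Hg) H1 H2).
Qed.

End PathCategoryTheory.

Theorem lemma6p4 (strong : bool) (C : PathCategory) (Dc : @MapClass C) :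
  is_display_class strong Dc ->
  forall (X I J : C) (d : Hom X I) (f : Hom I J),
    Dc X I d -> comp_closure Dc I J f ->
    exists (Pi : C) (pi : Hom Pi J), is_hPi strong d f Pi pi.
Proof.
  intros HD X I J d f Hd Hf.
  destruct (comp_closure_hPi strong Dc HD I J f Hf X d Hd) as (Pi & pi & HPi & _).
  exists Pi, pi. exact HPi.
Qed.
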